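(* Let $n,m\in\mathbb N$, $d:=\min\{n,m\}$, fix $\alpha\in[1,d]$ and let $\Phi:\mathbb M_n\to\mathbb M_m$ be Hermitian-preserving. (a) For all unitaries $U\in\mathbb M_m$, $V\in\mathbb M_n$: $\Phi\in\mathsf P_\alpha\iff\mathrm{Ad}_U\circ\Phi\circ\mathrm{Ad}_V\in\mathsf P_\alpha$, and $\Phi\in\mathsf{SP}_\alpha\iff\mathrm{Ad}_U\circ\Phi\circ\mathrm{Ad}_V\in\mathsf{SP}_\alpha$, where $\mathrm{Ad}_U(Y)=UYU^\ast$. (b) Membership of $\Phi$ in $\mathsf P_\alpha$ (and in $\mathsf{SP}_\alpha$) does not depend on the choice of matrix units used to define the Choi matrix: for any orthonormal basis $\{v_i\}$ of $\mathbb C^n$, with $E'_{ij}:=v_iv_j^\ast$ and $C'_\Phi:=\sum_{i,j}E'_{ij}\otimes\Phi(E'_{ij})$, one has $C'_\Phi\in\mathsf{BP}_\alpha\iff C_\Phi\in\mathsf{BP}_\alpha$ and $C'_\Phi\in\mathsf K_\alpha\iff C_\Phi\in\mathsf K_\alpha$.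
   Context: $C_\Phi:=\sum_{i,j=1}^nE_{ij}\otimes\Phi(E_{ij})$ with $E_{ij}$ the standard matrix units of $\mathbb M_n$. For $\psi=\sum_{i,j}a_{ij}e_i\otimes f_j\in\mathbb C^n\otimes\mathbb C^m$, its Schmidt coefficients $s_1(\psi)\ge\dots\ge s_d(\psi)\ge0$ are the singular values of $[a_{ij}]$. For $\alpha\in[1,d]$ with $k=\lfloor\alpha\rfloor$, $\theta=\alpha-k$, $r=\lceil\alpha\rceil$, a unit vector $\psi$ is $\alpha$-admissible if $s_j(\psi)=0$ for $j\ge r+1$ and, when $\theta>0$, $s_{k+1}(\psi)\le\frac\theta k\sum_{j=1}^ks_j(\psi)$; $\mathcal V_\alpha$ is the set of these. $\mathsf K_\alpha$ is the closure of the convex cone generated by $\{\psi\psi^\ast:\psi\in\mathcal V_\alpha\}$; $\mathsf{BP}_\alpha:=\{W \text{ Hermitian}:\langle\psi,W\psi\rangle\ge0\ \forall\psi\in\mathcal V_\alpha\}$. A Hermitian-preserving $\Phi$ is in $\mathsf P_\alpha$ if $C_\Phi\in\mathsf{BP}_\alpha$ and in $\mathsf{SP}_\alpha$ if $C_\Phi\in\mathsf K_\alpha$. *)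

From HB Require Import structures.
From mathcomp Require Import all_boot all_order all_algebra.
From mathcomp Require Import complex.
From mathcomp Require Import reals.
Set Implicit Arguments. Unset Strict Implicit. Unset Printing Implicit Defensive.
Import Order.TTheory GRing.Theory Num.Theory.
Local Open Scope ring_scope.
Local Open Scope complex_scope.

Section QDefs.
Variable R : realType.
Local Notation C := R[i].

Definition adjmx (p q : nat) (A : 'M[C]_(p, q)) : 'M[C]_(q, p) :=
  (map_mx Num.conj A)^T.

Definition isUnitaryMx (p : nat) (U : 'M[C]_p) : Prop :=
  U *m adjmx U = 1%:M.

Definition isHermitianMx (p : nat) (W : 'M[C]_p) : Prop := adjmx W = W.

Definition Ad_map (p : nat) (U : 'M[C]_p) (Y : 'M[C]_p) : 'M[C]_p :=
  U *m Y *m adjmx U.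

Definition hermitian_preserving (n m : nat) (Phi : 'M[C]_n -> 'M[C]_m) : Prop :=
  forall X : 'M[C]_n, isHermitianMx X -> isHermitianMx (Phi X).

(* index (i,j) of 'I_(p*q), the inverse of mxvec_index *)
Definition pair_of_index (p q : nat) (k : 'I_(p * q)) : 'I_p * 'I_q :=
  enum_val (cast_ord (esym (mxvec_cast p q)) k).

(* Kronecker product A (x) B : basis vector e_i (x) f_j has index mxvec_index i j *)
Definition kron (p1 q1 p2 q2 : nat) (A : 'M[C]_(p1, q1)) (B : 'M[C]_(p2, q2))
  : 'M[C]_(p1 * p2, q1 * q2) :=
  \matrix_(k, l) (A (pair_of_index k).1 (pair_of_index l).1 *
                  B (pair_of_index k).2 (pair_of_index l).2).

Definition choi (n m : nat) (Phi : 'M[C]_n -> 'M[C]_m) : 'M[C]_(n * m) :=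
  \sum_(i < n) \sum_(j < n) kron (delta_mx i j) (Phi (delta_mx i j)).

Definition choi_basis (n m : nat) (v : 'I_n -> 'cV[C]_n)
  (Phi : 'M[C]_n -> 'M[C]_m) : 'M[C]_(n * m) :=
  \sum_(i < n) \sum_(j < n)
     kron (v i *m adjmx (v j)) (Phi (v i *m adjmx (v j))).

Definition orthonormal_basis (n : nat) (v : 'I_n -> 'cV[C]_n) : Prop :=
  forall i j : 'I_n, adjmx (v i) *m v j = (i == j)%:R%:M.

(* The coefficient matrix [a_ij] of psi = sum a_ij e_i (x) f_j *)
Definition coefmx (n m : nat) (psi : 'cV[C]_(n * m)) : 'M[C]_(n, m) :=
  vec_mx psi^T.

(* s (1-based: s 1 >= ... >= s (min p q) >= 0) are the singular values of A,
   i.e. A = U * Sigma * V^* with U, V unitary, Sigma rectangular diagonal. *)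
Definition singular_values (p q : nat) (A : 'M[C]_(p, q)) (s : nat -> R) : Prop :=
  [/\ (forall j : nat, (1 <= j)%N -> (j < minn p q)%N -> s j.+1 <= s j),
      (forall j : nat, (1 <= j)%N -> (j <= minn p q)%N -> 0 <= s j) &
      exists (U : 'M[C]_p) (V : 'M[C]_q),
        [/\ isUnitaryMx U, isUnitaryMx V &
            A = U *m (\matrix_(i, j) ((i == j :> nat)%:R * (s i.+1)%:C))
                  *m adjmx V]].

Definition admissible (n m : nat) (alpha : R) (psi : 'cV[C]_(n * m)) : Prop :=
  let d := minn n m in
  let k := Num.floor alpha in
  let theta := alpha - k%:~R in
  let r := Num.ceil alpha in
  (adjmx psi *m psi = 1%:M) /\
  exists s : nat -> R,
    [/\ singular_values (coefmx psi) s,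
        (forall j : nat, (r + 1 <= j%:Z)%R -> (j <= d)%N -> s j = 0) &
        (0 < theta ->
           s (`|k|%N.+1) <= theta / k%:~R * \sum_(1 <= j < `|k|%N.+1) s j)].

Definition cone_gen (n m : nat) (alpha : R) (X : 'M[C]_(n * m)) : Prop :=
  exists (N : nat) (c : 'I_N -> R) (psi : 'I_N -> 'cV[C]_(n * m)),
    [/\ forall l, 0 <= c l, forall l, @admissible n m alpha (psi l) &
        X = \sum_(l < N) (c l)%:C *: (psi l *m adjmx (psi l))].

Definition Kcone (n m : nat) (alpha : R) (W : 'M[C]_(n * m)) : Prop :=
  forall eps : R, 0 < eps ->
    exists X, @cone_gen n m alpha X /\
      forall k l, `|W k l - X k l| < eps%:C.

Definition BP (n m : nat) (alpha : R) (W : 'M[C]_(n * m)) : Prop :=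
  isHermitianMx W /\
  forall psi, @admissible n m alpha psi -> 0 <= (adjmx psi *m W *m psi) 0 0.

Definition P_alpha (n m : nat) (alpha : R) (Phi : 'M[C]_n -> 'M[C]_m) : Prop :=
  @BP n m alpha (choi Phi).

Definition SP_alpha (n m : nat) (alpha : R) (Phi : 'M[C]_n -> 'M[C]_m) : Prop :=
  @Kcone n m alpha (choi Phi).

End QDefs.
Arguments cone_gen {R} n m alpha X.
Arguments Kcone {R} n m alpha W.
Arguments BP {R} n m alpha W.

(* Both parts reduce to the invariance of BP_alpha and K_alpha under conjugation
   by local unitaries A (x) B.  A local unitary maps psi to a vector with
   coefficient matrix A [a_ij] B^T, which has the same Schmidt coefficients, so
   it preserves alpha-admissibility; hence it preserves the inequalities defining
   BP_alpha and the generators of K_alpha, and, being linear with entries bounded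
   by 1, also their closure.  Finally, the Choi matrix of Ad_U o Phi o Ad_V is
   C_Phi conjugated by (1 (x) U)(V^T (x) 1), and with W the unitary whose columns
   are the v_i we have E'_ij = W E_ij W^*, so C'_Phi is C_Phi conjugated by
   (W (x) 1)(W^T (x) 1). *)

From HB Require Import structures.
From mathcomp Require Import all_boot all_order all_algebra.
From mathcomp Require Import complex reals.
From mathcomp Require Import ring lra.
Import Order.TTheory GRing.Theory Num.Theory.
Set Implicit Arguments. Unset Strict Implicit. Unset Printing Implicit Defensive.
Local Open Scope ring_scope.

Section ChoiUnitaryInvariance.
Variable R : realType.
Local Notation C := R[i].

Lemma pair_of_mxvec_index p q (i : 'I_p) (j : 'I_q) :
  pair_of_index (mxvec_index i j) = (i, j).
Proof. by rewrite /pair_of_index /mxvec_index cast_ordK enum_rankK. Qed.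

Lemma eq_mxvec_index p q (i k : 'I_p) (j l : 'I_q) :
  (mxvec_index i j == mxvec_index k l) = (i == k) && (j == l).
Proof.
apply/eqP/andP => [/(congr1 (@pair_of_index p q))|[/eqP-> /eqP->]] //.
by rewrite !pair_of_mxvec_index => -[-> ->].
Qed.

Lemma big_mxvec_index p q (F : 'I_(p * q) -> C) :
  \sum_k F k = \sum_(i < p) \sum_(j < q) F (mxvec_index i j).
Proof.
by rewrite (reindex _ (curry_mxvec_bij _ _)) pair_big; apply: eq_bigr => -[].
Qed.

Lemma kronE p1 q1 p2 q2 (A : 'M[C]_(p1, q1)) (B : 'M[C]_(p2, q2)) i j k l :
  kron A B (mxvec_index i j) (mxvec_index k l) = A i k * B j l.
Proof. by rewrite mxE !pair_of_mxvec_index. Qed.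

Lemma kron_mulmx p1 q1 r1 p2 q2 r2 (A1 : 'M[C]_(p1, q1)) (A2 : 'M[C]_(q1, r1))
    (B1 : 'M[C]_(p2, q2)) (B2 : 'M[C]_(q2, r2)) :
  kron A1 B1 *m kron A2 B2 = kron (A1 *m A2) (B1 *m B2).
Proof.
apply/matrixP => x y.
case/mxvec_indexP: x => i j; case/mxvec_indexP: y => k l.
rewrite mxE big_mxvec_index kronE !mxE mulr_suml; apply: eq_bigr => a _.
by rewrite mulr_sumr; apply: eq_bigr => b _; rewrite !kronE; ring.
Qed.

Lemma kron1 p q : kron (1%:M : 'M[C]_p) (1%:M : 'M[C]_q) = 1%:M.
Proof.
apply/matrixP => x y.
case/mxvec_indexP: x => i j; case/mxvec_indexP: y => k l.
by rewrite kronE !mxE eq_mxvec_index; case: (i == k); case: (j == l);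
  rewrite ?mulr1 ?mulr0 ?mul0r.
Qed.

Lemma kron_suml p1 q1 p2 q2 I (r : seq I) (P : pred I) (F : I -> 'M[C]_(p1, q1))
    (B : 'M[C]_(p2, q2)) :
  kron (\sum_(x <- r | P x) F x) B = \sum_(x <- r | P x) kron (F x) B.
Proof.
apply/matrixP => x y; rewrite mxE !summxE mulr_suml.
by apply: eq_bigr => z _; rewrite mxE.
Qed.

Lemma kron_sumr p1 q1 p2 q2 I (r : seq I) (P : pred I) (A : 'M[C]_(p1, q1))
    (F : I -> 'M[C]_(p2, q2)) :
  kron A (\sum_(x <- r | P x) F x) = \sum_(x <- r | P x) kron A (F x).
Proof.
apply/matrixP => x y; rewrite mxE !summxE mulr_sumr.
by apply: eq_bigr => z _; rewrite mxE.
Qed.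

Lemma kronZl p1 q1 p2 q2 (c : C) (A : 'M[C]_(p1, q1)) (B : 'M[C]_(p2, q2)) :
  kron (c *: A) B = c *: kron A B.
Proof. by apply/matrixP => x y; rewrite !mxE; ring. Qed.

Lemma kronZr p1 q1 p2 q2 (c : C) (A : 'M[C]_(p1, q1)) (B : 'M[C]_(p2, q2)) :
  kron A (c *: B) = c *: kron A B.
Proof. by apply/matrixP => x y; rewrite !mxE; ring. Qed.

Lemma adjmxE p q (A : 'M[C]_(p, q)) i j : adjmx A i j = Num.conj (A j i).
Proof. by rewrite !mxE. Qed.

Lemma adjmxK p q (A : 'M[C]_(p, q)) : adjmx (adjmx A) = A.
Proof. by apply/matrixP => i j; rewrite !adjmxE conjCK. Qed.

Lemma adjmxM p q r (A : 'M[C]_(p, q)) (B : 'M[C]_(q, r)) :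
  adjmx (A *m B) = adjmx B *m adjmx A.
Proof. by rewrite /adjmx map_mxM trmx_mul. Qed.

Lemma adjmx1 p : adjmx (1%:M : 'M[C]_p) = 1%:M.
Proof. by apply/matrixP => i j; rewrite adjmxE !mxE eq_sym rmorph_nat. Qed.

Lemma adjmx_tr p q (A : 'M[C]_(p, q)) : adjmx A^T = (adjmx A)^T.
Proof. by apply/matrixP => i j; rewrite !mxE. Qed.

Lemma adjmx_kron p1 q1 p2 q2 (A : 'M[C]_(p1, q1)) (B : 'M[C]_(p2, q2)) :
  adjmx (kron A B) = kron (adjmx A) (adjmx B).
Proof. by apply/matrixP => x y; rewrite !mxE rmorphM. Qed.

Lemma unitary_adjmxC p (U : 'M[C]_p) : isUnitaryMx U -> adjmx U *m U = 1%:M.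
Proof. exact: mulmx1C. Qed.

Lemma unitary_adjmx p (U : 'M[C]_p) : isUnitaryMx U -> isUnitaryMx (adjmx U).
Proof. by move=> hU; rewrite /isUnitaryMx adjmxK unitary_adjmxC. Qed.

Lemma unitary1 p : isUnitaryMx (1%:M : 'M[C]_p).
Proof. by rewrite /isUnitaryMx adjmx1 mulmx1. Qed.

Lemma unitaryM p (U V : 'M[C]_p) :
  isUnitaryMx U -> isUnitaryMx V -> isUnitaryMx (U *m V).
Proof. by move=> hU hV; rewrite /isUnitaryMx adjmxM mulmxA -(mulmxA U) hV mulmx1. Qed.

Lemma unitary_tr p (U : 'M[C]_p) : isUnitaryMx U -> isUnitaryMx U^T.
Proof. by move=> hU; rewrite /isUnitaryMx adjmx_tr -trmx_mul unitary_adjmxC // trmx1. Qed.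

Lemma unitary_kron p q (A : 'M[C]_p) (B : 'M[C]_q) :
  isUnitaryMx A -> isUnitaryMx B -> isUnitaryMx (kron A B).
Proof. by move=> hA hB; rewrite /isUnitaryMx adjmx_kron kron_mulmx hA hB kron1. Qed.

Lemma unitary_entry_le1 p (U : 'M[C]_p) i j : isUnitaryMx U -> `|U i j| <= 1.
Proof.
move=> hU.
have row_norm1 : \sum_a `|U i a| ^+ 2 = 1.
  have := congr1 (fun M : 'M[C]_p => M i i) hU; rewrite !mxE eqxx mulr1n => <-.
  by apply: eq_bigr => a _; rewrite normCK adjmxE.
rewrite -(@expr_le1 _ 2) // -row_norm1 (bigD1 j) //= lerDl.
by apply: sumr_ge0 => a _; apply: exprn_ge0.
Qed.

Lemma Ad_map1 p (X : 'M[C]_p) : Ad_map 1%:M X = X.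
Proof. by rewrite /Ad_map adjmx1 mul1mx mulmx1. Qed.

Lemma Ad_mapM p (U V X : 'M[C]_p) : Ad_map (U *m V) X = Ad_map U (Ad_map V X).
Proof. by rewrite /Ad_map adjmxM !mulmxA. Qed.

Lemma Ad_mapK p (U X : 'M[C]_p) :
  isUnitaryMx U -> Ad_map (adjmx U) (Ad_map U X) = X.
Proof. by move=> hU; rewrite -Ad_mapM unitary_adjmxC // Ad_map1. Qed.

Lemma Ad_mapB p (U X Y : 'M[C]_p) : Ad_map U (X - Y) = Ad_map U X - Ad_map U Y.
Proof. by rewrite /Ad_map mulmxBr mulmxBl. Qed.

Lemma Ad_map_sum p (U : 'M[C]_p) I (r : seq I) (P : pred I) (F : I -> 'M[C]_p) :
  Ad_map U (\sum_(x <- r | P x) F x) = \sum_(x <- r | P x) Ad_map U (F x).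
Proof. by rewrite /Ad_map mulmx_sumr mulmx_suml. Qed.

Lemma Ad_map_kron p q (A X : 'M[C]_p) (B Y : 'M[C]_q) :
  Ad_map (kron A B) (kron X Y) = kron (Ad_map A X) (Ad_map B Y).
Proof. by rewrite /Ad_map adjmx_kron !kron_mulmx. Qed.

Lemma hermitian_Ad p (U X : 'M[C]_p) :
  isHermitianMx X -> isHermitianMx (Ad_map U X).
Proof. by move=> hX; rewrite /isHermitianMx /Ad_map !adjmxM adjmxK hX mulmxA. Qed.

Lemma Ad_map_entry_le p (U X : 'M[C]_p) (e : C) : isUnitaryMx U ->
  (forall a b, `|X a b| <= e) -> forall k l, `|Ad_map U X k l| <= (p * p)%:R * e.
Proof.
move=> hU hX k l.
have term_le a b : `|U k a * X a b * adjmx U b l| <= e.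
  have Uka_le1 := unitary_entry_le1 k a hU.
  have Ubl_le1 := unitary_entry_le1 b l (unitary_adjmx hU).
  rewrite !normrM -[e]mul1r -[1 * e]mulr1.
  by apply: ler_pM => //; [apply: mulr_ge0 | apply: ler_pM].
rewrite mxE (eq_bigr (fun b => \sum_a U k a * X a b * adjmx U b l)); last first.
  by move=> b _; rewrite mxE mulr_suml.
apply: le_trans (ler_norm_sum _ _ _) _.
apply: le_trans (ler_sum _ (fun b _ => ler_norm_sum _ _ _)) _.
apply: le_trans (ler_sum _ (fun b _ => ler_sum _ (fun a _ => term_le a b))) _.
by rewrite !sumr_const card_ord mulr_natl -mulrnA.
Qed.

Lemma singular_values_unitaryM p q (A : 'M[C]_p) (B : 'M[C]_q) (M : 'M[C]_(p, q)) s :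
  isUnitaryMx A -> isUnitaryMx B ->
  singular_values M s -> singular_values (A *m M *m B) s.
Proof.
move=> hA hB [s_decr s_ge0 [U [V [hU hV ->]]]]; split => //.
exists (A *m U), (adjmx B *m V); split; first exact: unitaryM.
  by apply: unitaryM => //; apply: unitary_adjmx.
by rewrite adjmxM adjmxK !mulmxA.
Qed.

Lemma coefmx_kron p q (A : 'M[C]_p) (B : 'M[C]_q) (psi : 'cV[C]_(p * q)) :
  coefmx (kron A B *m psi) = A *m coefmx psi *m B^T.
Proof.
apply/matrixP => i j; rewrite !mxE big_mxvec_index.
under [RHS]eq_bigr do rewrite !mxE mulr_suml.
rewrite exchange_big; apply: eq_bigr => a _; apply: eq_bigr => b _.
by rewrite kronE !mxE; ring.
Qed.

Lemma admissible_kron n m (alpha : R) (A : 'M[C]_n) (B : 'M[C]_m) psi :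
  isUnitaryMx A -> isUnitaryMx B ->
  admissible alpha psi -> admissible alpha (kron A B *m psi).
Proof.
move=> hA hB [psi_unit [s [psi_s s_rank s_ratio]]]; split.
  rewrite adjmxM -mulmxA (mulmxA (adjmx (kron A B))).
  by rewrite (unitary_adjmxC (unitary_kron hA hB)) mul1mx.
exists s; split => //; rewrite coefmx_kron.
by apply: singular_values_unitaryM => //; apply: unitary_tr.
Qed.

Definition local_unitary_invariant n m (P : 'M[C]_(n * m) -> Prop) :=
  forall (A : 'M[C]_n) (B : 'M[C]_m) X,
    isUnitaryMx A -> isUnitaryMx B -> P X -> P (Ad_map (kron A B) X).

Lemma local_unitary_invariant_Ad n m (P : 'M[C]_(n * m) -> Prop)
    (A : 'M[C]_n) (B : 'M[C]_m) X :
  local_unitary_invariant P -> isUnitaryMx A -> isUnitaryMx B ->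
  P (Ad_map (kron A B) X) <-> P X.
Proof.
move=> hP hA hB; split; last exact: hP.
move/(hP _ _ _ (unitary_adjmx hA) (unitary_adjmx hB)).
by rewrite -adjmx_kron Ad_mapK //; apply: unitary_kron.
Qed.

Lemma BP_local_unitary_invariant n m (alpha : R) :
  local_unitary_invariant (BP n m alpha).
Proof.
move=> A B X hA hB [hX X_pos]; split; first exact: hermitian_Ad.
move=> psi /(admissible_kron (unitary_adjmx hA) (unitary_adjmx hB)) /X_pos.
by rewrite -adjmx_kron /Ad_map adjmxM adjmxK !mulmxA.
Qed.

Lemma cone_gen_local_unitary_invariant n m (alpha : R) :
  local_unitary_invariant (cone_gen n m alpha).
Proof.
move=> A B _ hA hB [N [c [psi [c_ge0 psi_adm ->]]]].
exists N, c, (fun l => kron A B *m psi l); split => //.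
  by move=> l; apply: admissible_kron.
rewrite Ad_map_sum; apply: eq_bigr => l _.
by rewrite /Ad_map -scalemxAr -scalemxAl adjmxM !mulmxA.
Qed.

Lemma Kcone_local_unitary_invariant n m (alpha : R) :
  local_unitary_invariant (Kcone n m alpha).
Proof.
move=> A B X hA hB hX eps eps_gt0.
pose K : R := ((n * m) * (n * m))%:R.
have K_ge0 : 0 <= K by rewrite ler0n.
pose e := eps / (K + 1).
have e_gt0 : 0 < e by rewrite divr_gt0 // ltr_wpDl.
have [Y [hY Y_close]] := hX e e_gt0.
exists (Ad_map (kron A B) Y); split; first exact: cone_gen_local_unitary_invariant.
move=> k l.
have -> : Ad_map (kron A B) X k l - Ad_map (kron A B) Y k l =
          Ad_map (kron A B) (X - Y) k l by rewrite Ad_mapB !mxE.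
apply: le_lt_trans (Ad_map_entry_le (unitary_kron hA hB) _ k l) _.
  by move=> a b; rewrite !mxE; apply/ltW/Y_close.
rewrite -(rmorph_nat (real_complex R)) -rmorphM /= ltcR.
by rewrite /e mulrA ltr_pdivrMr ?ltr_wpDl //; nra.
Qed.

Lemma BP_Ad_kron n m (alpha : R) (A : 'M[C]_n) (B : 'M[C]_m) X :
  isUnitaryMx A -> isUnitaryMx B ->
  BP n m alpha (Ad_map (kron A B) X) <-> BP n m alpha X.
Proof. exact/local_unitary_invariant_Ad/BP_local_unitary_invariant. Qed.

Lemma Kcone_Ad_kron n m (alpha : R) (A : 'M[C]_n) (B : 'M[C]_m) X :
  isUnitaryMx A -> isUnitaryMx B ->
  Kcone n m alpha (Ad_map (kron A B) X) <-> Kcone n m alpha X.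
Proof. exact/local_unitary_invariant_Ad/Kcone_local_unitary_invariant. Qed.

Lemma mulmx_delta_mx_entry p q r s (P : 'M[C]_(p, q)) (Q : 'M[C]_(r, s)) a b k l :
  (P *m delta_mx a b *m Q) k l = P k a * Q b l.
Proof.
rewrite mxE (bigD1 b) //= big1 => [|c /negbTE ncb]; last first.
  by rewrite mxE big1 ?mul0r // => d _; rewrite mxE ncb andbF mulr0.
rewrite mxE (bigD1 a) //= big1 => [|d /negbTE nda]; last by rewrite mxE nda mulr0.
by rewrite mxE !eqxx mulr1 !addr0.
Qed.

Lemma mulmx_delta_mx p q r s (P : 'M[C]_(p, q)) (Q : 'M[C]_(r, s)) a b :
  P *m delta_mx a b *m Q = \sum_k \sum_l (P k a * Q b l) *: delta_mx k l.
Proof.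
rewrite {1}[LHS]matrix_sum_delta; apply: eq_bigr => k _; apply: eq_bigr => l _.
by rewrite mulmx_delta_mx_entry.
Qed.

Lemma choi_Ad_comp n m (U : 'M[C]_m) (F : 'M[C]_n -> 'M[C]_m) :
  choi (Ad_map U \o F) = Ad_map (kron 1%:M U) (choi F).
Proof.
rewrite /choi Ad_map_sum; apply: eq_bigr => i _.
by rewrite Ad_map_sum; apply: eq_bigr => j _; rewrite Ad_map_kron Ad_map1.
Qed.

Lemma choi_comp_Ad n m (V : 'M[C]_n) (Phi : {linear 'M[C]_n -> 'M[C]_m}) :
  choi (Phi \o Ad_map V) = Ad_map (kron V^T 1%:M) (choi Phi).
Proof.
(* Expand V E_ij V^* in matrix units and exchange the two double sums. *)
pose G i j k l := (V k i * adjmx V j l) *: kron (delta_mx i j) (Phi (delta_mx k l)).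
transitivity (\sum_(i < n) \sum_(j < n) \sum_(k < n) \sum_(l < n) G i j k l).
  apply: eq_bigr => i _; apply: eq_bigr => j _.
  rewrite /= /Ad_map mulmx_delta_mx linear_sum kron_sumr; apply: eq_bigr => k _.
  by rewrite linear_sum kron_sumr; apply: eq_bigr => l _; rewrite linearZ kronZr.
transitivity (\sum_(k < n) \sum_(l < n) \sum_(i < n) \sum_(j < n) G i j k l).
  rewrite pair_big [RHS]pair_big.
  under eq_bigr do rewrite pair_big.
  by under [RHS]eq_bigr do rewrite pair_big; rewrite exchange_big.
rewrite /choi Ad_map_sum; apply: eq_bigr => k _.
rewrite Ad_map_sum; apply: eq_bigr => l _.
rewrite Ad_map_kron Ad_map1 /Ad_map mulmx_delta_mx kron_suml; apply: eq_bigr => i _.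
by rewrite kron_suml; apply: eq_bigr => j _; rewrite kronZl /G !mxE.
Qed.

Definition mx_of_cols n (v : 'I_n -> 'cV[C]_n) : 'M[C]_n := \matrix_(k, i) v i k 0.

Lemma orthonormal_basis_unitary n (v : 'I_n -> 'cV[C]_n) :
  orthonormal_basis v -> isUnitaryMx (mx_of_cols v).
Proof.
move=> hv; apply: mulmx1C; apply/matrixP => i j.
have := congr1 (fun M : 'M[C]_1 => M 0 0) (hv i j); rewrite !mxE mulr1n => <-.
by apply: eq_bigr => k _; rewrite !mxE.
Qed.

Lemma choi_basis_Ad n m (v : 'I_n -> 'cV[C]_n) (F : 'M[C]_n -> 'M[C]_m) :
  choi_basis v F = Ad_map (kron (mx_of_cols v) 1%:M) (choi (F \o Ad_map (mx_of_cols v))).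
Proof.
have unit_Ad i j : v i *m adjmx (v j) = Ad_map (mx_of_cols v) (delta_mx i j).
  by apply/matrixP => x y; rewrite mulmx_delta_mx_entry mxE big_ord1 !mxE.
rewrite /choi Ad_map_sum; apply: eq_bigr => i _.
rewrite Ad_map_sum; apply: eq_bigr => j _.
by rewrite Ad_map_kron Ad_map1 unit_Ad.
Qed.

End ChoiUnitaryInvariance.

Theorem proposition3p11 (R : realType) (n m : nat) (alpha : R)
    (Phi : {linear 'M[R[i]]_n -> 'M[R[i]]_m}) :
  1 <= alpha <= (minn n m)%:R ->
  hermitian_preserving Phi ->
  (forall (U : 'M[R[i]]_m) (V : 'M[R[i]]_n), isUnitaryMx U -> isUnitaryMx V ->
     (P_alpha alpha Phi <-> P_alpha alpha (Ad_map U \o Phi \o Ad_map V)) /\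
     (SP_alpha alpha Phi <-> SP_alpha alpha (Ad_map U \o Phi \o Ad_map V))) /\
  (forall v : 'I_n -> 'cV[R[i]]_n, orthonormal_basis v ->
     (BP n m alpha (choi_basis v Phi) <-> BP n m alpha (choi Phi)) /\
     (Kcone n m alpha (choi_basis v Phi) <-> Kcone n m alpha (choi Phi))).
Proof.
move=> _ _; split => [U V hU hV | v hv].
  rewrite /P_alpha /SP_alpha (choi_Ad_comp U (Phi \o Ad_map V)) choi_comp_Ad.
  have h1n := unitary1 R n; have h1m := unitary1 R m; have hVt := unitary_tr hV.
  rewrite (BP_Ad_kron _ _ h1n hU) (BP_Ad_kron _ _ hVt h1m).
  by rewrite (Kcone_Ad_kron _ _ h1n hU) (Kcone_Ad_kron _ _ hVt h1m).
have hW := orthonormal_basis_unitary hv.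
rewrite choi_basis_Ad choi_comp_Ad.
rewrite (BP_Ad_kron _ _ hW (unitary1 R m)) (BP_Ad_kron _ _ (unitary_tr hW) (unitary1 R m)).
by rewrite (Kcone_Ad_kron _ _ hW (unitary1 R m)) (Kcone_Ad_kron _ _ (unitary_tr hW) (unitary1 R m)).
Qed.
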